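(* Let $x:\mathbb{R}\to\mathbb{R}$ be a $2\Omega$-bandlimited signal with $|x(t)|\le c_{\max}<\infty$. Suppose $x$ is sampled by an IF-TEM with parameters $b_{\mathrm{IF}}>c_{\max}$, $\kappa>0$, $\delta>0$, and by an AIF-TEM with the same parameters $\kappa,\delta$ and a MAP block operating successfully with some $\beta>0$. If the AIF-TEM biases satisfy $b_n\le b_{\mathrm{IF}}$ for all $n$, then $f_{s_a}\le f_{s_c}$ and $OS_a\le OS_c$.
   Context: A signal $x$ is $2\Omega$-bandlimited if its Fourier transform vanishes outside $[-\Omega,\Omega]$. An IF-TEM with parameters $b_{\mathrm{IF}},\kappa,\delta$ produces strictly increasing firing times $t_n$ with $\frac1\kappa\int_{t_{n-1}}^{t_n}(x(s)+b_{\mathrm{IF}})ds=\delta$. An AIF-TEM with parameters $\kappa,\delta$ and window size $w$ produces strictly increasing firing times $t_n$ and biases $b_n>0$ with $\frac1\kappa\int_{t_{n-1}}^{t_n}(x(s)+b_n)ds=\delta$; with $c_n=\max_{t_{n-w}\le t\le t_n}|x(t)|$, the MAP block operates successfully if $b_n\ge c_n+\beta$ for all $n$. For either sampler, $T_n=t_n-t_{n-1}$, the average sampling frequency is $f_s=1/\mathbb{E}[T_n]$ where $\mathbb{E}$ is the average over the samples, and the average oversampling is $OS=f_s\cdot\pi/\Omega$; the subscripts $a$ and $c$ refer to the AIF-TEM and IF-TEM respectively. *)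

From HB Require Import structures.
From mathcomp Require Import all_boot all_order all_algebra.
From mathcomp Require Import all_classical all_reals all_analysis.
Set Implicit Arguments. Unset Strict Implicit. Unset Printing Implicit Defensive.
Import Order.TTheory GRing.Theory Num.Theory.
Import numFieldNormedType.Exports.
Local Open Scope classical_set_scope.
Local Open Scope ring_scope.

Section TEM.
Variable R : realType.
Local Notation mu := (@lebesgue_measure R).

Definition test_outside (W : R) (psi : R -> R) : Prop :=
  (forall (k : nat) (t : R), derivable (derive1n k psi) t 1) /\
  (exists M : R, forall w, M <= `|w| -> psi w = 0) /\
  (exists e : R, 0 < e /\ forall w, `|w| <= W + e -> psi w = 0).

(* x is 2W-bandlimited: its (distributional) Fourier transform vanishes
   outside [-W, W], i.e. <x^, psi> = <x, psi^> = 0 for every test function psi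
   supported outside [-W, W]; psi^(t) = int psi(w) (cos(wt) - i sin(wt)) dw,
   and both real and imaginary parts are written out. *)
Definition bandlimited (W : R) (x : R -> R) : Prop :=
  measurable_fun setT x /\
  forall psi, test_outside W psi ->
    (\int[mu]_(t in setT) (x t * \int[mu]_(w in setT) (psi w * cos (w * t))) = 0) /\
    (\int[mu]_(t in setT) (x t * \int[mu]_(w in setT) (psi w * sin (w * t))) = 0).

Definition IF_TEM (x : R -> R) (bIF kappa delta : R) (t : nat -> R) : Prop :=
  (forall n, t n < t n.+1) /\
  (forall n, kappa^-1 * \int[mu]_(s in `[t n, t n.+1]) (x s + bIF) = delta).

(* AIF-TEM: firing times t_n and biases b_n > 0 (n >= 1) with
   (1/kappa) int_{t_{n-1}}^{t_n} (x(s) + b_n) ds = delta. *)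
Definition AIF_TEM (x : R -> R) (kappa delta : R) (t b : nat -> R) : Prop :=
  (forall n, t n < t n.+1) /\
  (forall n, 0 < b n.+1) /\
  (forall n, kappa^-1 * \int[mu]_(s in `[t n, t n.+1]) (x s + b n.+1) = delta).

(* MAP block operates successfully with window w and margin beta:
   b_n >= c_n + beta where c_n = max_{t_{n-w} <= s <= t_n} |x(s)|
   (indices below 0 are truncated to 0), for all n >= 1. *)
Definition MAP_success (x : R -> R) (w : nat) (beta : R) (t b : nat -> R) : Prop :=
  forall n, (0 < n)%N ->
    forall s, t (n - w)%N <= s <= t n -> `|x s| + beta <= b n.

Definition avgT (t : nat -> R) (N : nat) : R :=
  (\sum_(1 <= n < N.+1) (t n - t n.-1)) / N%:R.

Definition fs (t : nat -> R) (N : nat) : R := (avgT t N)^-1.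

Definition OS (W : R) (t : nat -> R) (N : nat) : R := fs t N * pi / W.

End TEM.

(** Write g := x + b_IF, which is bounded below by b_IF - c_max > 0.  By
    induction, every IF-TEM firing time precedes the AIF-TEM firing time of
    the same index: if t^c_{n-1} <= t^a_{n-1} but t^a_n < t^c_n, then
      kappa delta = int_[t^a_{n-1}, t^a_n] (x + b_n)
                  <= int_[t^a_{n-1}, t^a_n] g
                  <  int_[t^c_{n-1}, t^c_n] g = kappa delta,
    the strict step because g is positive on the part of the larger interval
    left out.  Both samplers start at the same time, so the average interval
    (t_N - t_0) / N is larger for the AIF-TEM, and f_s and OS are smaller. *)
From HB Require Import structures.
From mathcomp Require Import all_boot all_order all_algebra.
From mathcomp Require Import all_classical all_reals all_analysis.
From mathcomp Require Import lra.
Set Implicit Arguments. Unset Strict Implicit. Unset Printing Implicit Defensive.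
Import Order.TTheory GRing.Theory Num.Theory.
Import numFieldNormedType.Exports.
Local Open Scope classical_set_scope.
Local Open Scope ring_scope.

Section IntervalIntegrals.
Context {R : realType}.
Local Notation mu := (@lebesgue_measure R).

Lemma bounded_integrable_subitv (f : R -> R) (M a b : R) (i : interval R) :
  measurable_fun setT f -> (forall s, `|f s| <= M) ->
  [set` i] `<=` `[a, b] -> mu.-integrable [set` i] (EFin \o f).
Proof.
move=> mf fM iab; apply: (@integrableS _ _ _ mu `[a, b]) => //.
apply: measurable_bounded_integrable => //.
- exact/compact_finite_measure/segment_compact.
- exact: measurable_funS mf.
- exists M; split; first exact: num_real.
  by move=> N MN s _ /=; apply: le_trans (ltW MN).
Qed.

Lemma Rintegral_cst_itv_oc (m a b : R) : a <= b ->
  \int[mu]_(s in `]a, b]) m = m * (b - a).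
Proof.
move=> ab; rewrite Rintegral_cst //.
(* [lebesgue_measure_itv] matches only up to conversion of the measurable
   structure, so it cannot be used with [rewrite]. *)
set mu_ab := (X in fine X).
have -> : mu_ab = _ := lebesgue_measure_itv `]a, b]%R.
rewrite /= lte_fin; have [//|ba] := ltP a b.
have -> : b = a by apply: le_anti; rewrite ab ba.
by rewrite subrr.
Qed.

Lemma Rintegral_lt_superitv (g : R -> R) (M m a0 a1 c0 c1 : R) :
  measurable_fun setT g -> (forall s, `|g s| <= M) ->
  (forall s, m <= g s) -> 0 < m ->
  c0 <= a0 -> a0 <= a1 -> a1 < c1 ->
  \int[mu]_(s in `[a0, a1]) g s < \int[mu]_(s in `[c0, c1]) g s.
Proof.
move=> mg gM mg_le m0 ca0 a01 ac1.
have int_sub (i : interval R) : [set` i] `<=` `[c0, c1] ->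
    mu.-integrable [set` i] (EFin \o g).
  exact: bounded_integrable_subitv.
have a1c1 := ltW ac1; have a0c1 := le_trans a01 a1c1.
have split_left : \int[mu]_(s in `[c0, c1]) g s - \int[mu]_(s in `[c0, a0]) g s
    = \int[mu]_(s in `[a0, c1]) g s.
  rewrite Rintegral_itvB ?bnd_simp //; last exact: int_sub.
  by rewrite Rintegral_itv_obnd_cbnd //; apply/int_sub/subset_itvScc.
have split_right : \int[mu]_(s in `[a0, c1]) g s - \int[mu]_(s in `[a0, a1]) g s
    = \int[mu]_(s in `]a1, c1]) g s.
  rewrite Rintegral_itvB ?bnd_simp //.
  by apply/int_sub/subset_itvScc; rewrite bnd_simp.
have left_ge0 : 0 <= \int[mu]_(s in `[c0, a0]) g s.
  by apply: Rintegral_ge0 => s _; apply: le_trans (ltW m0) (mg_le s).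
have right_gt0 : 0 < \int[mu]_(s in `]a1, c1]) g s.
  have sub_right : `]a1, c1] `<=` `[c0, c1].
    by apply: subset_itvScc; rewrite bnd_simp // (le_trans ca0 a01).
  apply: (@lt_le_trans _ _ (\int[mu]_(s in `]a1, c1]) m)).
    by rewrite Rintegral_cst_itv_oc // mulr_gt0 // subr_gt0.
  apply: le_Rintegral => //; last exact: int_sub.
  exact: (bounded_integrable_subitv (f := fun=> m) (M := `|m|)) sub_right.
have -> : \int[mu]_(s in `[a0, a1]) g s
    = \int[mu]_(s in `[a0, c1]) g s - \int[mu]_(s in `]a1, c1]) g s.
  by rewrite -split_right opprB addrC subrK.
rewrite -split_left.
by rewrite -addrA -opprD ltrBlDr ltrDl ltr_wpDl.
Qed.

End IntervalIntegrals.

Section TimeEncoding.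
Context {R : realType}.
Local Notation mu := (@lebesgue_measure R).

Lemma IF_TEM_le_AIF_TEM (x : R -> R) (cmax bIF kappa delta : R)
    (tc ta b : nat -> R) :
  measurable_fun setT x -> (forall s, `|x s| <= cmax) ->
  cmax < bIF -> 0 < kappa ->
  IF_TEM x bIF kappa delta tc -> AIF_TEM x kappa delta ta b ->
  (forall n, b n <= bIF) -> ta 0%N = tc 0%N ->
  forall n, tc n <= ta n.
Proof.
move=> mx xM cb kappa0 [tc_inc tc_eq] [ta_inc [_ ta_eq]] b_le t0.
elim=> [|n IHn]; first by rewrite t0.
rewrite leNgt; apply/negP => ta_lt_tc.
have mxc c : measurable_fun setT (fun s => x s + c).
  exact: measurable_realfun.measurable_funD mx (measurable_cst _).
have xcM c s : `|x s + c| <= cmax + `|c|.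
  by rewrite (le_trans (ler_normD _ _)) // lerD2r.
have g_ge s : bIF - cmax <= x s + bIF.
  by have := xM s; rewrite ler_norml => /andP[? _]; lra.
have same_integral : \int[mu]_(s in `[tc n, tc n.+1]) (x s + bIF)
    = \int[mu]_(s in `[ta n, ta n.+1]) (x s + b n.+1).
  apply: (mulfI (invr_neq0 (lt0r_neq0 kappa0))).
  by rewrite tc_eq ta_eq.
have lt_int : \int[mu]_(s in `[ta n, ta n.+1]) (x s + bIF)
    < \int[mu]_(s in `[tc n, tc n.+1]) (x s + bIF).
  apply: Rintegral_lt_superitv (mxc bIF) (xcM bIF) g_ge _ IHn _ ta_lt_tc.
    by rewrite subr_gt0.
  exact: ltW.
move: lt_int; rewrite same_integral ltNge => /negP; apply.
apply: le_Rintegral => //; last by move=> s _; rewrite lerD2l.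
- exact: bounded_integrable_subitv (mxc _) (xcM _) (@subset_refl _ _).
- exact: bounded_integrable_subitv (mxc _) (xcM _) (@subset_refl _ _).
Qed.

Lemma avgT_telescope (t : nat -> R) (N : nat) :
  avgT t N = (t N - t 0%N) / N%:R.
Proof. by rewrite /avgT big_add1 /= telescope_sumr. Qed.

Lemma le_fs (t s : nat -> R) (N : nat) :
  (forall n, s n < s n.+1) -> (0 < N)%N ->
  t 0%N = s 0%N -> s N <= t N -> fs t N <= fs s N.
Proof.
move=> s_inc N0 t0 sNt.
have s0N : s 0%N < s N by apply: (homo_ltn lt_trans s_inc).
have N_gt0 : 0 < N%:R :> R by rewrite ltr0n.
have avg_s_gt0 : 0 < (s N - s 0%N) / N%:R by rewrite divr_gt0 // subr_gt0.
have avg_t_gt0 : 0 < (t N - t 0%N) / N%:R.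
  by rewrite divr_gt0 // subr_gt0 t0 (lt_le_trans s0N).
rewrite /fs !avgT_telescope lef_pV2 ?posrE //.
by rewrite ler_pM2r ?invr_gt0 // t0 lerD2r.
Qed.

Lemma le_OS (W : R) (t s : nat -> R) (N : nat) :
  0 < W -> fs t N <= fs s N -> OS W t N <= OS W s N.
Proof.
move=> W0 le_ts; rewrite /OS ler_pM2r ?invr_gt0 //.
by apply: ler_wpM2r => //; exact: pi_ge0.
Qed.

End TimeEncoding.

Theorem theorem4 (R : realType) (W cmax bIF kappa delta beta : R) (w : nat)
  (x : R -> R) (tc ta b : nat -> R) (N : nat) :
  0 < W -> bandlimited W x ->
  (forall s, `|x s| <= cmax) ->
  cmax < bIF -> 0 < kappa -> 0 < delta -> 0 < beta ->
  IF_TEM x bIF kappa delta tc ->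
  AIF_TEM x kappa delta ta b ->
  MAP_success x w beta ta b ->
  (forall n, b n <= bIF) ->
  ta 0%N = tc 0%N ->
  (0 < N)%N ->
  fs ta N <= fs tc N /\ OS W ta N <= OS W tc N.
Proof.
move=> W0 [mx _] xM cb kappa0 _ _ IF AIF _ b_le t0 N0.
have tc_le_ta := IF_TEM_le_AIF_TEM mx xM cb kappa0 IF AIF b_le t0.
have fs_le : fs ta N <= fs tc N by apply: le_fs; first case: IF.
by split; last exact: le_OS.
Qed.
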